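(* $\mathsf{HA}\vdash\mathsf{HA}^\exists$, i.e. every axiom of $\mathsf{HA}^\exists$ is provable in $\mathsf{HA}$. Consequently every formula provable in $\mathsf{HA}^\exists$ is provable in $\mathsf{HA}$.
   Context: $\mathsf{HA}$ is Heyting arithmetic: intuitionistic first-order arithmetic over $0,\mathsf{S},+,\cdot,=$ with the equality axioms, the successor axioms, the defining axioms for $+$ and $\cdot$, and the induction scheme $P(0)\wedge\forall\alpha(P(\alpha)\to P(\alpha+1))\to\forall\alpha P(\alpha)$ for all formulas $P$. The $\exists$-translation $F\mapsto F^\exists$ is: $F^\exists=F$ for atomic $F$; it commutes with $\wedge,\vee,\to,\exists$; and $(\forall xF)^\exists=\neg\exists x\neg F^\exists$. $\mathsf{HA}^\exists$ is the intuitionistic theory whose axioms are the $\exists$-translations of the axioms of $\mathsf{HA}$ (in particular, the translated induction axiom is $P(0)\wedge\neg\exists\alpha\neg(P(\alpha)\to P(\alpha+1))\to\neg\exists\alpha\neg P(\alpha)$). *)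

From Stdlib Require Import List.
Import ListNotations.

Inductive term : Type :=
| tvar : nat -> term
| tzero : term
| tsucc : term -> term
| tplus : term -> term -> term
| tmult : term -> term -> term.

Inductive form : Type :=
| fEq : term -> term -> form
| fBot : form
| fAnd : form -> form -> form
| fOr : form -> form -> form
| fImp : form -> form -> form
| fAll : form -> form      (* binds de Bruijn index 0 *)
| fEx : form -> form.

Definition fNot (A : form) : form := fImp A fBot.

Fixpoint tsubst (s : nat -> term) (t : term) : term :=
  match t with
  | tvar n => s n
  | tzero => tzero
  | tsucc u => tsucc (tsubst s u)
  | tplus u v => tplus (tsubst s u) (tsubst s v)
  | tmult u v => tmult (tsubst s u) (tsubst s v)
  end.

Definition tlift (t : term) : term := tsubst (fun n => tvar (S n)) t.

Definition up (s : nat -> term) : nat -> term :=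
  fun n => match n with 0 => tvar 0 | S k => tlift (s k) end.

Fixpoint fsubst (s : nat -> term) (A : form) : form :=
  match A with
  | fEq u v => fEq (tsubst s u) (tsubst s v)
  | fBot => fBot
  | fAnd A B => fAnd (fsubst s A) (fsubst s B)
  | fOr A B => fOr (fsubst s A) (fsubst s B)
  | fImp A B => fImp (fsubst s A) (fsubst s B)
  | fAll A => fAll (fsubst (up s) A)
  | fEx A => fEx (fsubst (up s) A)
  end.

Definition flift (A : form) : form := fsubst (fun n => tvar (S n)) A.

(* substitution of t for variable 0 (other variables shift down) *)
Definition inst (t : term) : nat -> term :=
  fun n => match n with 0 => t | S k => tvar k end.

(* Axioms may contain free variables; since the axiom rule is available
   under every binder, they behave like their universal closures
   (as with a Hilbert system with the generalization rule). *)
Inductive Der (T : form -> Prop) : list form -> form -> Prop :=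
| D_ax : forall G A, T A -> Der T G A
| D_hyp : forall G A, In A G -> Der T G A
| D_botE : forall G A, Der T G fBot -> Der T G A
| D_andI : forall G A B, Der T G A -> Der T G B -> Der T G (fAnd A B)
| D_andE1 : forall G A B, Der T G (fAnd A B) -> Der T G A
| D_andE2 : forall G A B, Der T G (fAnd A B) -> Der T G B
| D_orI1 : forall G A B, Der T G A -> Der T G (fOr A B)
| D_orI2 : forall G A B, Der T G B -> Der T G (fOr A B)
| D_orE : forall G A B C, Der T G (fOr A B) -> Der T (A :: G) C ->
    Der T (B :: G) C -> Der T G C
| D_impI : forall G A B, Der T (A :: G) B -> Der T G (fImp A B)
| D_impE : forall G A B, Der T G (fImp A B) -> Der T G A -> Der T G B
| D_allI : forall G A, Der T (map flift G) A -> Der T G (fAll A)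
| D_allE : forall G A t, Der T G (fAll A) -> Der T G (fsubst (inst t) A)
| D_exI : forall G A t, Der T G (fsubst (inst t) A) -> Der T G (fEx A)
| D_exE : forall G A B, Der T G (fEx A) ->
    Der T (A :: map flift G) (flift B) -> Der T G B.

Definition provable (T : form -> Prop) (A : form) : Prop := Der T [] A.

Definition v0 := tvar 0.
Definition v1 := tvar 1.
Definition v2 := tvar 2.
Definition v3 := tvar 3.

(* The induction axiom for P, where index 0 of P plays the role of alpha
   and indices k+1 are the parameters k:
   P(0) /\ forall a (P(a) -> P(a+1)) -> forall a P(a). *)
Definition induction_ax (P : form) : form :=
  fImp (fAnd (fsubst (inst tzero) P)
             (fAll (fImp P (fsubst (fun n => match n with
                                              | 0 => tsucc (tvar 0)
                                              | S k => tvar (S k) end) P))))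
       (fAll P).

Inductive HA_ax : form -> Prop :=
| ax_refl : HA_ax (fEq v0 v0)
| ax_sym : HA_ax (fImp (fEq v0 v1) (fEq v1 v0))
| ax_trans : HA_ax (fImp (fEq v0 v1) (fImp (fEq v1 v2) (fEq v0 v2)))
| ax_cong_succ : HA_ax (fImp (fEq v0 v1) (fEq (tsucc v0) (tsucc v1)))
| ax_cong_plus : HA_ax (fImp (fEq v0 v1) (fImp (fEq v2 v3)
                          (fEq (tplus v0 v2) (tplus v1 v3))))
| ax_cong_mult : HA_ax (fImp (fEq v0 v1) (fImp (fEq v2 v3)
                          (fEq (tmult v0 v2) (tmult v1 v3))))
| ax_succ_nz : HA_ax (fNot (fEq (tsucc v0) tzero))
| ax_succ_inj : HA_ax (fImp (fEq (tsucc v0) (tsucc v1)) (fEq v0 v1))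
| ax_plus0 : HA_ax (fEq (tplus v0 tzero) v0)
| ax_plusS : HA_ax (fEq (tplus v0 (tsucc v1)) (tsucc (tplus v0 v1)))
| ax_mult0 : HA_ax (fEq (tmult v0 tzero) tzero)
| ax_multS : HA_ax (fEq (tmult v0 (tsucc v1)) (tplus (tmult v0 v1) v0))
| ax_ind : forall P, HA_ax (induction_ax P).

Fixpoint extr (A : form) : form :=
  match A with
  | fEq u v => fEq u v
  | fBot => fBot
  | fAnd A B => fAnd (extr A) (extr B)
  | fOr A B => fOr (extr A) (extr B)
  | fImp A B => fImp (extr A) (extr B)
  | fEx A => fEx (extr A)
  | fAll A => fNot (fEx (fNot (extr A)))
  end.

Definition HAex_ax (A : form) : Prop := exists B, HA_ax B /\ A = extr B.

(* Every axiom of HA other than induction is quantifier-free, so the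
   exists-translation leaves it unchanged.
   For an induction axiom, write Q for the translated formula.  Induction in HA
   applied to ~~Q proves ~~Q(a) for all a: the translated step hypothesis
   ~ exists a ~(Q(a) -> Q(a+1)) turns ~~Q(a) into ~~Q(a+1), since ~Q(a+1)
   together with Q(a) would refute Q(a) -> Q(a+1).  Intuitionistically,
   forall a ~~Q(a) already implies ~ exists a ~Q(a). *)
From Stdlib Require Import List.
Import ListNotations.

Lemma incl_cons_same {X : Type} (a : X) (l m : list X) : incl l m -> incl (a :: l) (a :: m).
Proof. intros Hlm; apply incl_cons; [now left | now apply incl_tl]. Qed.

Lemma Der_weaken T G A : Der T G A -> forall G', incl G G' -> Der T G' A.
Proof.
  induction 1; intros G' HG; eauto using Der, incl_cons_same, incl_map.
  - eapply D_orE; eauto using incl_cons_same.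
  - eapply D_exE; eauto using incl_cons_same, incl_map.
Qed.

Lemma Der_transfer (T T' : form -> Prop) :
  (forall A, T A -> provable T' A) -> forall G A, Der T G A -> Der T' G A.
Proof.
  intros HT G A D; induction D; eauto using Der.
  eapply Der_weaken; [now apply HT | apply incl_nil_l].
Qed.

Lemma tsubst_ext s s' t : (forall n, s n = s' n) -> tsubst s t = tsubst s' t.
Proof. intros H; induction t; simpl; congruence. Qed.

Lemma up_ext s s' : (forall n, s n = s' n) -> forall n, up s n = up s' n.
Proof. intros H [|n]; simpl; [reflexivity | now rewrite H]. Qed.

Lemma fsubst_ext A : forall s s', (forall n, s n = s' n) -> fsubst s A = fsubst s' A.
Proof.
  induction A; intros s s' H; simpl; f_equal; auto using tsubst_ext, up_ext.
Qed.

Lemma tsubst_comp s s' t :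
  tsubst s (tsubst s' t) = tsubst (fun n => tsubst s (s' n)) t.
Proof. induction t; simpl; congruence. Qed.

Lemma up_comp s s' n :
  tsubst (up s) (up s' n) = up (fun m => tsubst s (s' m)) n.
Proof.
  destruct n; simpl; [reflexivity |].
  unfold tlift; rewrite !tsubst_comp; reflexivity.
Qed.

Lemma fsubst_comp A : forall s s',
  fsubst s (fsubst s' A) = fsubst (fun n => tsubst s (s' n)) A.
Proof.
  induction A; intros s s'; simpl; rewrite ?tsubst_comp; f_equal; auto;
    rewrite IHA; apply fsubst_ext, up_comp.
Qed.

Lemma tsubst_id t : tsubst tvar t = t.
Proof. induction t; simpl; congruence. Qed.

Lemma fsubst_id A : forall s, (forall n, s n = tvar n) -> fsubst s A = A.
Proof.
  induction A; intros s H; simpl; f_equal; auto;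
    try (rewrite (tsubst_ext _ tvar _ H); apply tsubst_id);
    apply IHA; intros [|n]; simpl; rewrite ?H; reflexivity.
Qed.

Lemma inst_var0_up_lift A :
  fsubst (inst (tvar 0)) (fsubst (up (fun n => tvar (S n))) A) = A.
Proof. rewrite fsubst_comp; apply fsubst_id; now intros [|n]. Qed.

Lemma Der_allE_var0 T G A : Der T G (flift (fAll A)) -> Der T G A.
Proof. intros D; rewrite <- (inst_var0_up_lift A); now apply D_allE. Qed.

Lemma Der_exI_var0 T G A : Der T G A -> Der T G (flift (fEx A)).
Proof.
  intros D; apply (D_exI _ _ _ (tvar 0)); now rewrite inst_var0_up_lift.
Qed.

Ltac by_hyp := apply D_hyp; simpl; tauto.

Lemma Der_all_dneg_not_ex_not T G Q :
  Der T G (fImp (fAll (fNot (fNot Q))) (fNot (fEx (fNot Q)))).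
Proof.
  apply D_impI, D_impI.
  apply (D_exE _ _ (fNot Q) fBot); [by_hyp |].
  apply (D_impE _ _ (fNot Q)); [| by_hyp].
  apply Der_allE_var0; by_hyp.
Qed.

(* Under a binder, the hypothesis [~ exists a ~(A -> B)] of the enclosing
   context appears lifted; its witness is the bound variable 0. *)
Lemma Der_dneg_step T G A B :
  Der T G (fImp (flift (fNot (fEx (fNot (fImp A B)))))
                (fImp (fNot (fNot A)) (fNot (fNot B)))).
Proof.
  apply D_impI, D_impI, D_impI.
  apply (D_impE _ _ (fNot A)); [by_hyp |].
  apply D_impI.
  apply (D_impE _ _ (flift (fEx (fNot (fImp A B))))); [by_hyp |].
  apply Der_exI_var0, D_impI.
  apply (D_impE _ _ B); [by_hyp |].
  apply (D_impE _ _ A); by_hyp.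
Qed.

Definition subst_succ0 : nat -> term :=
  fun n => match n with 0 => tsucc (tvar 0) | S k => tvar (S k) end.

Definition ex_induction_ax (Q : form) : form :=
  fImp (fAnd (fsubst (inst tzero) Q)
             (fNot (fEx (fNot (fImp Q (fsubst subst_succ0 Q))))))
       (fNot (fEx (fNot Q))).

Lemma extr_fsubst A : forall s, extr (fsubst s A) = fsubst s (extr A).
Proof. induction A; intros s; simpl; rewrite ?IHA, ?IHA1, ?IHA2; reflexivity. Qed.

Lemma extr_induction_ax P : extr (induction_ax P) = ex_induction_ax (extr P).
Proof. unfold induction_ax; simpl; now rewrite !extr_fsubst. Qed.

Lemma HA_dneg_induction G Q :
  Der HA_ax G (fImp (fAnd (fsubst (inst tzero) Q)
                          (fNot (fEx (fNot (fImp Q (fsubst subst_succ0 Q))))))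
                    (fAll (fNot (fNot Q)))).
Proof.
  apply D_impI.
  eapply D_impE; [apply D_ax, (ax_ind (fNot (fNot Q))) | apply D_andI].
  - apply D_impI.
    apply (D_impE _ _ (fsubst (inst tzero) Q)); [by_hyp |].
    eapply D_andE1; by_hyp.
  - apply D_allI.
    eapply D_impE; [apply Der_dneg_step |].
    eapply D_andE2; by_hyp.
Qed.

Lemma HA_ex_induction_ax G Q : Der HA_ax G (ex_induction_ax Q).
Proof.
  apply D_impI.
  eapply D_impE; [apply Der_all_dneg_not_ex_not |].
  eapply D_impE; [apply HA_dneg_induction | by_hyp].
Qed.

Lemma HA_extr_HA_ax B : HA_ax B -> provable HA_ax (extr B).
Proof.
  destruct 1; try (apply D_ax; constructor).
  rewrite extr_induction_ax; apply HA_ex_induction_ax.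
Qed.

Theorem mainTheorem9 :
  (forall A, HAex_ax A -> provable HA_ax A) /\
  (forall A, provable HAex_ax A -> provable HA_ax A).
Proof.
  assert (HAex_in_HA : forall A, HAex_ax A -> provable HA_ax A).
  { intros A [B [HB ->]]; now apply HA_extr_HA_ax. }
  split; [exact HAex_in_HA |].
  intros A; apply Der_transfer, HAex_in_HA.
Qed.
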